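(* Let $K$ be any infinite field of characteristic $0$ (e.g. $\mathbb{R}$, $\mathbb{Q}$, the real algebraic numbers). Then the statements of Theorems 4.1 and 5.1 remain true with $\mathbb{C}$ replaced by $K$ throughout: for $\varphi(x)$, $x\in K^n$, in disjunctive normal form $\bigvee_{i=1}^{d}(\bigwedge_{j} t_{ij}=0\wedge\bigwedge_{k} u_{ik}\neq0)$ with $t_{ij},u_{ik}\in K[x]$ there is $p\in K[a,b,x]$ with $\varphi(x)\iff(\exists a\in K)(\forall b\in K)\,p(a,b,x)=0$ for all $x\in K^n$; and for $\varphi(x)$ in conjunctive normal form $\bigwedge_{i=1}^{d}(\bigvee_{j} t_{ij}=0\vee\bigvee_{k} u_{ik}\neq0)$ there is $q\in K[a,b,x]$ with $\varphi(x)\iff(\forall a\in K)(\exists b\in K)\,q(a,b,x)=0$ for all $x\in K^n$ (with the same explicit polynomials and degree bounds as over $\mathbb{C}$).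
   Context: Explicit polynomials: $p=\prod_{i}\big[(1-a\prod_k u_{ik})+\sum_j t_{ij}b^j\big]$ and $q=\big[1-b\prod_{i=1}^d(a-i)\big]\big[\sum_{i=1}^d\prod_{h\neq i}(a-h)\prod_j t_{ij}\prod_k(1-b\,u_{ik})\big]$; degree bounds: $p$ has degree at most $d$ in $a$ and at most the total number of equations in $b$; $q$ has degree at most $2d-1$ in $a$ and at most $f+1$ in $b$, $f$ the maximal number of inequations in a conjunct. *)

From mathcomp Require Import all_boot all_algebra.
From mathcomp Require Import mpoly.
Set Implicit Arguments. Unset Strict Implicit. Unset Printing Implicit Defensive.
Import GRing.Theory.
Local Open Scope ring_scope.

(* Polynomials in K[a,b,x] with x = (x_0,...,x_{n-1}) are elements of
   {mpoly K[n.+2]}: variable 0 is a, variable 1 is b, variable i+2 is x_i. *)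
Section Defs.
Variables (K : fieldType) (n : nat).

Definition varA : 'I_n.+2 := ord0.
Definition varB : 'I_n.+2 := lift ord0 ord0.
Definition varX (i : 'I_n) : 'I_n.+2 := lift ord0 (lift ord0 i).

Definition liftx (t : {mpoly K[n]}) : {mpoly K[n.+2]} :=
  t \mPo [tuple 'X_(varX i) | i < n].

Definition env (a b : K) (x : 'I_n -> K) (k : 'I_n.+2) : K :=
  if unlift ord0 k is Some k1 then
    if unlift ord0 k1 is Some i then x i else b
  else a.

Definition mdegv (m : nat) (p : {mpoly K[m]}) (k : 'I_m) : nat :=
  \max_(mn <- msupp p) mn k.

Variable d : nat.
Variables (T U : 'I_d -> seq {mpoly K[n]}).

Definition holdsDNF (x : 'I_n -> K) : Prop :=
  exists i : 'I_d, (forall t, t \in T i -> t.@[x] = 0) /\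
                   (forall u, u \in U i -> u.@[x] != 0).

Definition holdsCNF (x : 'I_n -> K) : Prop :=
  forall i : 'I_d, (exists2 t, t \in T i & t.@[x] = 0) \/
                   (exists2 u, u \in U i & u.@[x] != 0).

Local Notation XA := ('X_varA : {mpoly K[n.+2]}).
Local Notation XB := ('X_varB : {mpoly K[n.+2]}).

Definition pDNF : {mpoly K[n.+2]} :=
  \prod_(i < d) ((1 - XA * \prod_(u <- U i) liftx u)
                 + \sum_(j < size (T i)) liftx (nth 0 (T i) j) * XB ^+ j.+1).

Definition qCNF : {mpoly K[n.+2]} :=
  (1 - XB * \prod_(i < d) (XA - (i.+1)%:R%:MP)) *
  \sum_(i < d) ((\prod_(h < d | h != i) (XA - (h.+1)%:R%:MP))
                * \prod_(t <- T i) liftx t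
                * \prod_(u <- U i) (1 - XB * liftx u)).

Definition num_eqs : nat := \sum_(i < d) size (T i).
Definition max_ineqs : nat := \max_(i < d) size (U i).

End Defs.

From mathcomp Require Import all_boot all_algebra.
From mathcomp Require Import mpoly.
From mathcomp Require Import zify.
Set Implicit Arguments. Unset Strict Implicit. Unset Printing Implicit Defensive.
Import GRing.Theory.
Local Open Scope ring_scope.

(* If disjunct i of the DNF holds at x, take a = (prod_k u_ik(x))^-1: the i-th
   factor of p(a,-,x) is then the zero polynomial in b.  Conversely, if
   p(a,b,x) = 0 for all b in the infinite field K, then p(a,-,x) is the zero
   polynomial, hence so is one of its factors: all t_ij(x) vanish, and the
   vanishing constant term 1 - a prod_k u_ik(x) forces every u_ik(x) <> 0.
   For the CNF, if a is not in {1,...,d} the first factor of q vanishes at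
   b = (prod_i (a - i))^-1.  If a = i, only the i-th summand survives: a
   constant, nonzero in characteristic 0, times prod_j t_ij(x) prod_k (1 - b u_ik(x)),
   which has a root b exactly when clause i holds at x. *)

Section DegreeInVariable.
Variables (R : nzRingType) (m : nat) (k : 'I_m).
Implicit Types (p q : {mpoly R[m]}) (N : nat).

Definition mdegv_le p N := forall mn, mn \in msupp p -> (mn k <= N)%N.

Lemma mdegv_le_weaken p N N' : (N <= N')%N -> mdegv_le p N -> mdegv_le p N'.
Proof. by move=> le h mn /h /leq_trans; apply. Qed.

Lemma mdegv_leC c N : mdegv_le c%:MP N.
Proof. by move=> mn; rewrite msuppC; case: (c == 0) => //; rewrite inE => /eqP ->; rewrite mnm0E. Qed.

Lemma mdegv_le0 N : mdegv_le 0 N.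
Proof. by move=> mn; rewrite msupp0. Qed.

Lemma mdegv_le1 N : mdegv_le 1 N.
Proof. by move=> mn; rewrite msupp1 inE => /eqP ->; rewrite mnm0E. Qed.

Lemma mdegv_leX i : mdegv_le 'X_i (i == k).
Proof. by move=> mn; rewrite msuppX inE => /eqP ->; rewrite mnm1E. Qed.

Lemma mdegv_leXk : mdegv_le 'X_k 1.
Proof. by have := @mdegv_leX k; rewrite eqxx. Qed.

Lemma mdegv_leX_neq i : i != k -> mdegv_le 'X_i 0.
Proof. by move/negbTE=> ik; have := @mdegv_leX i; rewrite ik. Qed.

Lemma mdegv_leD p q N : mdegv_le p N -> mdegv_le q N -> mdegv_le (p + q) N.
Proof. by move=> hp hq mn /msuppD_le; rewrite mem_cat => /orP[/hp|/hq]. Qed.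

Lemma mdegv_leB p q N : mdegv_le p N -> mdegv_le q N -> mdegv_le (p - q) N.
Proof. by move=> hp hq; apply: mdegv_leD => // mn; rewrite (perm_mem (msuppN q)); apply: hq. Qed.

Lemma mdegv_leM p q N1 N2 :
  mdegv_le p N1 -> mdegv_le q N2 -> mdegv_le (p * q) (N1 + N2).
Proof.
move=> hp hq mn /msuppM_le /allpairsP [[m1 m2] /= [h1 h2 ->]].
by rewrite mnmDE leq_add ?hp ?hq.
Qed.

Lemma mdegv_leZ c p N : mdegv_le p N -> mdegv_le (c *: p) N.
Proof. by move=> h; rewrite -mul_mpolyC -[N]add0n; apply: mdegv_leM => //; apply: mdegv_leC. Qed.

Lemma mdegv_le_exp p N e : mdegv_le p N -> mdegv_le (p ^+ e) (N * e).
Proof.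
move=> h; elim: e => [|e IH]; first by rewrite expr0; apply: mdegv_le1.
by rewrite exprS mulnS; apply: mdegv_leM.
Qed.

Lemma mdegv_le_sum (I : Type) (r : seq I) (P : pred I) F N :
  (forall i, P i -> mdegv_le (F i) N) -> mdegv_le (\sum_(i <- r | P i) F i) N.
Proof.
move=> h; apply: (big_ind (mdegv_le^~ N)) => //; first exact: mdegv_le0.
by move=> p q; apply: mdegv_leD.
Qed.

Lemma mdegv_le_prod (I : Type) (r : seq I) (P : pred I) F Nf :
  (forall i, P i -> mdegv_le (F i) (Nf i)) ->
  mdegv_le (\prod_(i <- r | P i) F i) (\sum_(i <- r | P i) Nf i).
Proof.
move=> h; apply: (big_rec2 mdegv_le); first exact: mdegv_le1.
by move=> i p N Pi hp; apply: mdegv_leM => //; apply: h.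
Qed.

Lemma mdegv_le_prod0 (I : Type) (r : seq I) (P : pred I) F :
  (forall i, P i -> mdegv_le (F i) 0) -> mdegv_le (\prod_(i <- r | P i) F i) 0.
Proof.
move=> h; apply: (mdegv_le_weaken (N := \sum_(i <- r | P i) 0%N)).
  by rewrite big1.
exact: mdegv_le_prod.
Qed.

End DegreeInVariable.

Lemma mdegv_le_bound (K : fieldType) m (k : 'I_m) (p : {mpoly K[m]}) N :
  mdegv_le k p N -> (mdegv p k <= N)%N.
Proof. by move=> h; apply/bigmax_leqP_seq => mn /h. Qed.

Section Coordinates.
Variables (K : fieldType) (n : nat).

Lemma varB_neq_varA : varB n != varA n.
Proof. by rewrite eq_sym neq_lift. Qed.

Lemma varX_neq_varA (i : 'I_n) : varX i != varA n.
Proof. by rewrite eq_sym neq_lift. Qed.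

Lemma varX_neq_varB (i : 'I_n) : varX i != varB n.
Proof. by rewrite /varX /varB (inj_eq lift_inj) eq_sym neq_lift. Qed.

Lemma mdegv_le_liftx (k : 'I_n.+2) (t : {mpoly K[n]}) :
  (forall i, varX i != k) -> mdegv_le k (liftx t) 0.
Proof.
move=> hk; rewrite /liftx comp_mpolyE; apply: mdegv_le_sum => mn _.
apply: mdegv_leZ; apply: mdegv_le_prod0 => i _; rewrite tnth_mktuple.
by rewrite -(muln0 (mn i)) mulnC; apply/mdegv_le_exp/mdegv_leX_neq.
Qed.

Variables (a b : K) (x : 'I_n -> K).

Lemma env_varA : env a b x (varA n) = a.
Proof. by rewrite /env /varA unlift_none. Qed.

Lemma env_varB : env a b x (varB n) = b.
Proof. by rewrite /env /varB liftK unlift_none. Qed.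

Lemma env_varX i : env a b x (varX i) = x i.
Proof. by rewrite /env /varX !liftK. Qed.

Lemma meval_liftx (t : {mpoly K[n]}) : (liftx t).@[env a b x] = t.@[x].
Proof.
rewrite /liftx comp_mpoly_meval; apply: meval_eq => i.
by rewrite tnth_mktuple mevalXU env_varX.
Qed.

End Coordinates.

Section DegreeBounds.
Variables (K : fieldType) (n d : nat) (T U : 'I_d -> seq {mpoly K[n]}).
Local Notation a := (varA n).
Local Notation b := (varB n).

Lemma mdegv_pDNF_varA : (mdegv (pDNF T U) a <= d)%N.
Proof.
apply: mdegv_le_bound; rewrite /pDNF.
apply: (mdegv_le_weaken (N := \sum_(i < d) 1)); first by rewrite sum1_card card_ord.
apply: mdegv_le_prod => i _; apply: mdegv_leD.
  apply: mdegv_leB; first exact: mdegv_le1.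
  rewrite -[1%N]addn0; apply: mdegv_leM; first exact: mdegv_leXk.
  by apply: mdegv_le_prod0 => u _; apply/mdegv_le_liftx/varX_neq_varA.
apply: mdegv_le_sum => j _; apply: (mdegv_le_weaken (N := 0 + 0 * j.+1)) => //.
apply: mdegv_leM; first exact/mdegv_le_liftx/varX_neq_varA.
exact/mdegv_le_exp/mdegv_leX_neq/varB_neq_varA.
Qed.

Lemma mdegv_pDNF_varB : (mdegv (pDNF T U) b <= num_eqs T)%N.
Proof.
apply: mdegv_le_bound; rewrite /pDNF /num_eqs.
apply: mdegv_le_prod => i _; apply: mdegv_leD.
  apply: (mdegv_le_weaken (N := 0)) => //.
  apply: mdegv_leB; first exact: mdegv_le1.
  rewrite -[0%N]addn0; apply: mdegv_leM.
    by apply: mdegv_leX_neq; rewrite eq_sym varB_neq_varA.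
  by apply: mdegv_le_prod0 => u _; apply/mdegv_le_liftx/varX_neq_varB.
apply: mdegv_le_sum => j _.
apply: (mdegv_le_weaken (N := 0 + 1 * j.+1)); first by rewrite mul1n ltn_ord.
apply: mdegv_leM; first exact/mdegv_le_liftx/varX_neq_varB.
exact/mdegv_le_exp/mdegv_leXk.
Qed.

Lemma mdegv_qCNF_varA : (mdegv (qCNF T U) a <= (2 * d).-1)%N.
Proof.
have shift_in_a c : mdegv_le a ('X_a - c%:MP : {mpoly K[n.+2]}) 1.
  by apply: mdegv_leB; [exact: mdegv_leXk | exact: mdegv_leC].
apply: mdegv_le_bound; rewrite /qCNF.
apply: (mdegv_le_weaken (N := (0 + \sum_(i < d) 1) + \sum_(h < d.-1) 1)).
  by rewrite add0n !sum1_card !card_ord; lia.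
apply: mdegv_leM.
  apply: mdegv_leB; first exact: mdegv_le1.
  apply: mdegv_leM; first exact/mdegv_leX_neq/varB_neq_varA.
  by apply: mdegv_le_prod => i _; apply: shift_in_a.
apply: mdegv_le_sum => i _.
apply: (mdegv_le_weaken (N := \sum_(h < d | h != i) 1 + 0 + 0)).
  by rewrite !addn0 sum1dep_card cardsE cardC1 card_ord sum1_card card_ord.
apply: mdegv_leM; first apply: mdegv_leM.
- by apply: mdegv_le_prod => h _; apply: shift_in_a.
- by apply: mdegv_le_prod0 => t _; apply/mdegv_le_liftx/varX_neq_varA.
- apply: mdegv_le_prod0 => u _; apply: mdegv_leB; first exact: mdegv_le1.
  rewrite -[0%N]addn0; apply: mdegv_leM; first exact/mdegv_leX_neq/varB_neq_varA.
  exact/mdegv_le_liftx/varX_neq_varA.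
Qed.

Lemma mdegv_qCNF_varB : (mdegv (qCNF T U) b <= (max_ineqs U).+1)%N.
Proof.
have shift_in_b c : mdegv_le b ('X_a - c%:MP : {mpoly K[n.+2]}) 0.
  apply: mdegv_leB; last exact: mdegv_leC.
  by apply: mdegv_leX_neq; rewrite eq_sym varB_neq_varA.
have one_sub_b p : mdegv_le b p 0 -> mdegv_le b (1 - 'X_b * p) 1.
  move=> hp; apply: mdegv_leB; first exact: mdegv_le1.
  by rewrite -[1%N]addn0; apply: mdegv_leM => //; apply: mdegv_leXk.
apply: mdegv_le_bound; rewrite /qCNF.
apply: (mdegv_le_weaken (N := 1 + max_ineqs U)); first by rewrite add1n.
apply: mdegv_leM; first by apply/one_sub_b/mdegv_le_prod0 => i _; apply: shift_in_b.
apply: mdegv_le_sum => i _.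
apply: (mdegv_le_weaken (N := 0 + 0 + \sum_(u <- U i) 1)).
  by rewrite sum1_size; apply: (leq_bigmax (F := fun i => size (U i))).
apply: mdegv_leM; first apply: mdegv_leM.
- by apply: mdegv_le_prod0 => h _; apply: shift_in_b.
- by apply: mdegv_le_prod0 => t _; apply/mdegv_le_liftx/varX_neq_varB.
- by apply: mdegv_le_prod => u _; apply/one_sub_b/mdegv_le_liftx/varX_neq_varB.
Qed.

End DegreeBounds.

Section DNFFactor.
Variable K : fieldType.
Implicit Types (c y : K) (s : seq K).

Definition dnf_factor c s : {poly K} := c%:P + 'X * Poly s.

Lemma horner_dnf_factor c s y :
  (dnf_factor c s).[y] = c + \sum_(j < size s) s`_j * y ^+ j.+1.
Proof.
rewrite hornerD hornerC hornerM hornerX (horner_coef_wide _ (size_Poly _)).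
rewrite mulr_sumr; congr (_ + _); apply: eq_bigr => j _.
by rewrite coef_Poly exprS mulrCA.
Qed.

Lemma coef_dnf_factor c s j :
  (dnf_factor c s)`_j = if j is j'.+1 then s`_j' else c.
Proof. by rewrite coefD coefC coefXM coef_Poly; case: j => [|j]; rewrite ?addr0 ?add0r. Qed.

Lemma dnf_factor_eq0 c s : dnf_factor c s = 0 <-> c = 0 /\ {in s, forall y, y = 0}.
Proof.
split=> [/polyP F0 | [c0 s0]].
  split; first by have := F0 0%N; rewrite coef_dnf_factor coef0.
  by move=> y ys; have := F0 (index y s).+1; rewrite coef_dnf_factor coef0 nth_index.
apply/polyP => -[|j]; rewrite coef_dnf_factor coef0 //.
by have [/(mem_nth 0)/s0 | /(nth_default 0) ->] := ltnP j (size s).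
Qed.

End DNFFactor.

Section DNF.
Variables (K : fieldType) (Hinf : forall s : seq K, exists y : K, y \notin s).

Lemma uniq_seq_of_size N : exists s : seq K, uniq s /\ size s = N.
Proof.
elim: N => [|N [s [us ss]]]; first by exists [::].
by have [y hy] := Hinf s; exists (y :: s); rewrite /= hy us ss.
Qed.

Lemma poly_eq0_horner (P : {poly K}) : (forall y, P.[y] = 0) -> P = 0.
Proof.
move=> P0; apply/eqP/negPn/negP => nzP.
have [s [us ss]] := uniq_seq_of_size (size P).
have rootsP : all (root P) s by apply/allP => y _; apply/rootP.
by have := max_poly_roots nzP rootsP us; rewrite ss ltnn.
Qed.

Variables (n d : nat) (T U : 'I_d -> seq {mpoly K[n]}).

Lemma meval_pDNF a b x :
  (pDNF T U).@[env a b x] =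
  (\prod_(i < d) dnf_factor (1 - a * \prod_(u <- U i) u.@[x])
                            [seq t.@[x] | t <- T i]).[b].
Proof.
rewrite /pDNF rmorph_prod horner_prod; apply: eq_bigr => i _.
rewrite horner_dnf_factor size_map rmorphD rmorphB rmorph1 rmorphM rmorph_prod /=.
rewrite mevalXU env_varA rmorph_sum /=; congr (_ - _ * _ + _).
  by apply: eq_bigr => u _; rewrite meval_liftx.
apply: eq_bigr => j _; rewrite rmorphM rmorphXn /= mevalXU env_varB meval_liftx.
by rewrite (nth_map 0).
Qed.

Lemma pDNF_correct x :
  holdsDNF T U x <-> exists a, forall b, (pDNF T U).@[env a b x] = 0.
Proof.
split=> [[i [ht hu]] | [a hab]].
  have nzU : \prod_(u <- U i) u.@[x] != 0.
    by rewrite prodf_seq_neq0; apply/allP => u /hu ->.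
  exists (\prod_(u <- U i) u.@[x])^-1 => b.
  have factor_i0 : dnf_factor (1 - (\prod_(u <- U i) u.@[x])^-1 * \prod_(u <- U i) u.@[x])
                              [seq t.@[x] | t <- T i] = 0.
    apply/dnf_factor_eq0; split; first by rewrite mulVf ?subrr.
    by move=> _ /mapP [t tT ->]; apply: ht.
  by rewrite meval_pDNF (bigD1 i) //= factor_i0 mul0r horner0.
have /eqP := poly_eq0_horner (fun b => etrans (esym (meval_pDNF a b x)) (hab b)).
case/prodf_eq0 => i _ /eqP /dnf_factor_eq0 [c0 s0]; exists i; split.
  by move=> t tT; apply/s0/map_f.
move=> u uU; apply/eqP => u0; move/eqP: c0.
by rewrite (big_rem u) //= u0 mul0r mulr0 subr0 oner_eq0.
Qed.

End DNF.

Section CNF.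
Variables (K : fieldType) (Hchar : [pchar K] =i pred0).

Lemma pchar0_natr_inj : injective (fun m : nat => m%:R : K).
Proof.
have natr_eq0 := (pcharf0P K).1 Hchar.
suff le_natr m k : (m <= k)%N -> (m%:R : K) = k%:R -> m = k.
  by move=> m k; case: (leqP m k) => [/le_natr // | /ltnW /le_natr h /esym/h].
move=> le_mk e; apply/eqP; rewrite eqn_leq le_mk /= -subn_eq0 -natr_eq0.
by rewrite natrB // e subrr.
Qed.

Variables (n d : nat) (T U : 'I_d -> seq {mpoly K[n]}).

Lemma meval_qCNF a b x :
  (qCNF T U).@[env a b x] =
  (1 - b * \prod_(i < d) (a - i.+1%:R)) *
  \sum_(i < d) (\prod_(h < d | h != i) (a - h.+1%:R)
                * \prod_(t <- T i) t.@[x] * \prod_(u <- U i) (1 - b * u.@[x])).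
Proof.
have meval_shift c : ('X_(varA n) - c%:MP).@[env a b x] = a - c.
  by rewrite rmorphB /= mevalXU env_varA mevalC.
rewrite /qCNF rmorphM rmorphB rmorph1 rmorphM rmorph_prod /= mevalXU env_varB.
rewrite rmorph_sum /=; congr ((_ - _ * _) * _).
  by apply: eq_bigr => i _; rewrite meval_shift.
apply: eq_bigr => i _; rewrite !rmorphM !rmorph_prod /=; congr (_ * _ * _).
- by apply: eq_bigr => h _; rewrite meval_shift.
- by apply: eq_bigr => t _; rewrite meval_liftx.
- by apply: eq_bigr => u _; rewrite rmorphB rmorph1 rmorphM /= mevalXU env_varB meval_liftx.
Qed.

Lemma meval_qCNF_index (i : 'I_d) b x :
  (qCNF T U).@[env i.+1%:R b x] =
  \prod_(h < d | h != i) (i.+1%:R - h.+1%:R)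
  * \prod_(t <- T i) t.@[x] * \prod_(u <- U i) (1 - b * u.@[x]).
Proof.
rewrite meval_qCNF (bigD1 i) //= subrr mul0r mulr0 subr0 mul1r.
rewrite (bigD1 i) //= [X in _ + X]big1 ?addr0 // => j ji.
by rewrite (bigD1 i) 1?eq_sym //= subrr !mul0r.
Qed.

Lemma qCNF_correct x :
  holdsCNF T U x <-> forall a, exists b, (qCNF T U).@[env a b x] = 0.
Proof.
split=> [hx a | hq i].
  have [/eqP/prodf_eq0 [i _] | nz] := eqVneq (\prod_(i < d) (a - i.+1%:R)) 0.
    rewrite subr_eq0 => /eqP ->.
    case: (hx i) => [[t tT t0] | [u uU u0]].
      by exists 0; rewrite meval_qCNF_index (big_rem _ tT) //= t0 !(mul0r, mulr0).
    exists u.@[x]^-1; rewrite meval_qCNF_index (big_rem _ uU) //=.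
    by rewrite mulVf // subrr mul0r mulr0.
  by exists (\prod_(i < d) (a - i.+1%:R))^-1; rewrite meval_qCNF mulVf // subrr mul0r.
have [b] := hq i.+1%:R; rewrite meval_qCNF_index => /eqP hb.
have [/hasP [t tT /eqP t0] | hT] := boolP (has (fun t => t.@[x] == 0) (T i)).
  by left; exists t.
have [/hasP [u uU u0] | hU] := boolP (has (fun u => u.@[x] != 0) (U i)).
  by right; exists u.
exfalso; move: hb; apply/negP; rewrite !mulf_neq0 //.
- apply/prodf_neq0 => h hi; rewrite subr_eq0; apply: contra hi => /eqP.
  by move/pchar0_natr_inj => [] /val_inj ->.
- by rewrite prodf_seq_neq0; apply/allP => t tT; apply: (hasPn hT).
- rewrite big1_seq ?oner_neq0 // => u uU.
  by have /negPn/eqP -> := hasPn hU u uU; rewrite mulr0 subr0.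
Qed.

End CNF.

Theorem mainTheorem4 (K : fieldType)
  (Hchar : [pchar K] =i pred0)
  (Hinf : forall s : seq K, exists x : K, x \notin s)
  (n d : nat) (T U : 'I_d -> seq {mpoly K[n]}) :
  ((forall x : 'I_n -> K,
      holdsDNF T U x <->
      exists a : K, forall b : K, (pDNF T U).@[env a b x] = 0)
   /\ (mdegv (pDNF T U) (varA n) <= d)%N
   /\ (mdegv (pDNF T U) (varB n) <= num_eqs T)%N)
  /\
  ((forall x : 'I_n -> K,
      holdsCNF T U x <->
      forall a : K, exists b : K, (qCNF T U).@[env a b x] = 0)
   /\ (mdegv (qCNF T U) (varA n) <= (2 * d).-1)%N
   /\ (mdegv (qCNF T U) (varB n) <= (max_ineqs U).+1)%N).
Proof.
split; split; [|split| |split].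
- exact: pDNF_correct.
- exact: mdegv_pDNF_varA.
- exact: mdegv_pDNF_varB.
- exact: qCNF_correct.
- exact: mdegv_qCNF_varA.
- exact: mdegv_qCNF_varB.
Qed.
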